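(* Every $r$-graph whose underlying simple graph is the Wagner graph $V_8$ is of class $1$, i.e., its edge-chromatic number equals $r$.
   Context: Graphs may have parallel edges but no loops. An $r$-graph is an $r$-regular graph $G$ such that for every $X\subseteq V(G)$ of odd cardinality, at least $r$ edges have exactly one end in $X$. A graph is class $1$ if its edge-chromatic number (minimum number of colors in a proper edge-coloring) equals its maximum degree. The Wagner graph $V_8$ is the cubic graph obtained from a cycle $v_0v_1\cdots v_7v_0$ by adding the edges $v_iv_{i+4}$ for $i=0,1,2,3$. *)

From mathcomp Require Import all_boot.
Set Implicit Arguments. Unset Strict Implicit. Unset Printing Implicit Defensive.

(* A finite multigraph: finite vertex type, finite edge type, and for each
   edge its (unordered) pair of endpoints, given as an ordered pair.
   Parallel edges = distinct edges with the same endpoints. *)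
Record multigraph := Multigraph {
  vtx : finType;
  edg : finType;
  ends : edg -> vtx * vtx }.

Section Multigraph.
Variable G : multigraph.

Definition loopless : Prop := forall e : edg G, (ends e).1 != (ends e).2.

Definition incident (e : edg G) (v : vtx G) : bool :=
  (v == (ends e).1) || (v == (ends e).2).

Definition deg (v : vtx G) : nat := #|[set e : edg G | incident e v]|.

Definition max_deg : nat := \max_(v : vtx G) deg v.

Definition regular (r : nat) : Prop := forall v : vtx G, deg v = r.

Definition cut (X : {set vtx G}) : {set edg G} :=
  [set e : edg G | ((ends e).1 \in X) (+) ((ends e).2 \in X)].

Definition r_graph (r : nat) : Prop :=
  regular r /\ forall X : {set vtx G}, odd #|X| -> r <= #|cut X|.

Definition proper_edge_coloring (k : nat) (c : edg G -> 'I_k) : Prop :=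
  forall e e' : edg G, e != e' ->
    (exists v : vtx G, incident e v && incident e' v) -> c e != c e'.

Definition edge_colorable (k : nat) : Prop :=
  exists c : edg G -> 'I_k, proper_edge_coloring c.

Definition edge_chromatic_number_is (k : nat) : Prop :=
  edge_colorable k /\ forall k', edge_colorable k' -> k <= k'.

Definition class1 : Prop := edge_chromatic_number_is max_deg.

Definition adj (u v : vtx G) : bool :=
  [exists e : edg G, (ends e == (u, v)) || (ends e == (v, u))].

End Multigraph.

(* Wagner graph V_8 on 'I_8: cycle v0..v7 plus chords v_i v_{i+4}. *)
Definition wagner_adj (i j : 'I_8) : bool :=
  let d := (i + 8 - j) %% 8 in [|| d == 1, d == 7 | d == 4].

Definition underlying_is_wagner (G : multigraph) : Prop :=
  exists f : 'I_8 -> vtx G,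
    bijective f /\ forall i j : 'I_8, adj (f i) (f j) = wagner_adj i j.

From mathcomp Require Import all_boot zify.

Set Implicit Arguments.
Unset Strict Implicit.
Unset Printing Implicit Defensive.

(* Label the cycle edge v_i v_{i+1} of V_8 by i,
   the chord v_i v_{i+4} by 8 + (i mod 4), and let c_i be the multiplicity of
   the cycle edge i.  Comparing the degree
   equations at v_i and v_{i+4} (which share their chord) around the cycle
   forces c_i = c_{i+4}.  The even cycle edges and the odd cycle edges form two
   perfect matchings; colour each class of parallel even edges by an initial
   interval of [0, r), each class of odd edges by a final interval, and the
   chord v_i v_{i+4} by the interval just above the even edge at v_i.  Since
   c_i = c_{i+4} this interval is the same seen from both ends of the chord,
   and by the degree equation the three intervals at each vertex tile
   [0, r). *)

Section EdgeColoring.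
Variable G : multigraph.

Lemma deg_le_colors (k : nat) (c : edg G -> 'I_k) (v : vtx G) :
  proper_edge_coloring c -> deg v <= k.
Proof.
move=> c_proper; rewrite /deg -(card_in_imset (f := c)).
  by apply: leq_trans (max_card _) _; rewrite card_ord.
move=> e e'; rewrite !inE => ev e'v; apply: contra_eq => neq_ee'.
by apply: c_proper => //; exists v; rewrite ev e'v.
Qed.

Lemma regular_max_deg (r : nat) (v : vtx G) : regular G r -> max_deg G = r.
Proof.
move=> G_reg; apply/eqP; rewrite eqn_leq; apply/andP; split.
  by apply/bigmax_leqP => u _; rewrite G_reg.
by rewrite -(G_reg v) (leq_bigmax v).
Qed.

Lemma regular_colorable_class1 (r : nat) (v : vtx G) :
  regular G r -> edge_colorable G r ->
  class1 G /\ edge_chromatic_number_is G r.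
Proof.
move=> G_reg G_col.
have chi_r : edge_chromatic_number_is G r.
  split=> // k [c c_proper]; rewrite -(G_reg v).
  exact: deg_le_colors c_proper.
by rewrite /class1 (regular_max_deg v G_reg).
Qed.

Section IntervalColoring.
Variables (T : eqType) (ty : edg G -> T) (lo : T -> nat) (r : nat).

Definition class_card (t : T) : nat := #|[set e | ty e == t]|.

Hypothesis interval_le : forall e, lo (ty e) + class_card (ty e) <= r.
Hypothesis intervals_disjoint : forall e e' v,
  incident e v -> incident e' v -> ty e != ty e' ->
  lo (ty e) + class_card (ty e) <= lo (ty e') \/
  lo (ty e') + class_card (ty e') <= lo (ty e).

Definition class_index (e : edg G) : nat :=
  index e (enum [set e' | ty e' == ty e]).

Lemma class_index_lt e : class_index e < class_card (ty e).
Proof. by rewrite /class_index /class_card cardE index_mem mem_enum inE eqxx. Qed.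

Lemma class_index_inj e e' :
  ty e = ty e' -> class_index e = class_index e' -> e = e'.
Proof.
move=> same_ty; rewrite /class_index same_ty => same_index.
have mem_class x : ty x = ty e' -> x \in enum [set e0 | ty e0 == ty e'].
  by move=> tyx; rewrite mem_enum inE tyx.
rewrite -(nth_index e (mem_class e same_ty)) same_index.
by rewrite (nth_index e (mem_class e' erefl)).
Qed.

Lemma interval_color_lt e : lo (ty e) + class_index e < r.
Proof. by apply: leq_trans (interval_le e); rewrite ltn_add2l class_index_lt. Qed.

Lemma interval_edge_colorable : edge_colorable G r.
Proof.
exists (fun e => Ordinal (interval_color_lt e)).
move=> e e' neq_ee' [v /andP [ev e'v]]; apply/negP => /eqP [same_color].
have := class_index_lt e; have := class_index_lt e'.
case: (ty e =P ty e') => [same_ty | /eqP diff_ty].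
  move: same_color; rewrite same_ty => /addnI /(class_index_inj same_ty) eq_ee'.
  by rewrite eq_ee' eqxx in neq_ee'.
have := intervals_disjoint ev e'v diff_ty; lia.
Qed.

End IntervalColoring.
End EdgeColoring.

Lemma card_preim_seq (T : finType) (h : T -> nat) (s : seq nat) : uniq s ->
  #|[set x | h x \in s]| = \sum_(t <- s) #|[set x | h x == t]|.
Proof.
elim: s => [_|t s IHs /= /andP [t_notin_s s_uniq]].
  by rewrite big_nil; apply/eqP; rewrite cards_eq0; apply/eqP/setP => x; rewrite !inE.
rewrite big_cons -IHs // -(cardsUI [set x | h x == t]) -[LHS]addn0.
congr (_ + _); first by apply: eq_card => x; rewrite !inE.
apply/esym/eqP; rewrite cards_eq0; apply/eqP/setP => x; rewrite !inE.
by apply/negP => /andP [/eqP ->]; apply/negP.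
Qed.

Definition wagner_edge_type (u w : nat) : nat :=
  if w == (u + 1) %% 8 then u else if u == (w + 1) %% 8 then w else 8 + u %% 4.

Definition wagner_types_at (v : nat) : seq nat :=
  match v with
  | 0 => [:: 7; 0; 8] | 1 => [:: 0; 1; 9] | 2 => [:: 1; 2; 10]
  | 3 => [:: 2; 3; 11] | 4 => [:: 3; 4; 8] | 5 => [:: 4; 5; 9]
  | 6 => [:: 5; 6; 10] | _ => [:: 6; 7; 11]
  end.

Lemma wagner_types_at_uniq (v : nat) : uniq (wagner_types_at v).
Proof. by case: v => [|[|[|[|[|[|[|[|]]]]]]]]. Qed.

Lemma wagner_incidence (u w v : 'I_8) : wagner_adj u w ->
  ((v == u) || (v == w)) = (wagner_edge_type u w \in wagner_types_at v).
Proof.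
by move: u w v; do 3![case=> [[|[|[|[|[|[|[|[|//]]]]]]]] ?]].
Qed.

Definition wagner_offset (cnt : nat -> nat) (r t : nat) : nat :=
  match t with
  | 0 | 2 | 4 | 6 => 0
  | 1 | 3 | 5 | 7 => r - cnt t
  | 8 | 9 => cnt 0
  | _ => cnt 2
  end.

Lemma wagner_offsets_fit (cnt : nat -> nat) (r : nat) :
  (forall v, v < 8 -> \sum_(t <- wagner_types_at v) cnt t = r) ->
  forall v, v < 8 ->
  {in wagner_types_at v, forall t, wagner_offset cnt r t + cnt t <= r} /\
  {in wagner_types_at v &, forall t t', t != t' ->
     wagner_offset cnt r t + cnt t <= wagner_offset cnt r t' \/
     wagner_offset cnt r t' + cnt t' <= wagner_offset cnt r t}.
Proof.
move=> deg_eq.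
have d0 := deg_eq 0 isT; have d1 := deg_eq 1 isT; have d2 := deg_eq 2 isT.
have d3 := deg_eq 3 isT; have d4 := deg_eq 4 isT; have d5 := deg_eq 5 isT.
have d6 := deg_eq 6 isT; have d7 := deg_eq 7 isT.
rewrite /= !big_cons big_nil in d0 d1 d2 d3 d4 d5 d6 d7.
have opposite_counts :
  cnt 0 = cnt 4 /\ cnt 1 = cnt 5 /\ cnt 2 = cnt 6 /\ cnt 3 = cnt 7 by lia.
move=> v v_lt; split=> [t | t t'].
  case: v v_lt => [|[|[|[|[|[|[|[|//]]]]]]]] _;
    by rewrite !inE => /or3P [] /eqP -> /=; lia.
case: v v_lt => [|[|[|[|[|[|[|[|//]]]]]]]] _;
  by rewrite !inE => /or3P [] /eqP -> /or3P [] /eqP -> //= _; lia.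
Qed.

Section WagnerLabelling.
Variables (G : multigraph) (f : 'I_8 -> vtx G) (g : vtx G -> 'I_8).
Hypotheses (fK : cancel f g) (gK : cancel g f).
Hypothesis f_adj : forall i j, adj (f i) (f j) = wagner_adj i j.

Definition wagner_label (e : edg G) : nat :=
  wagner_edge_type (g (ends e).1) (g (ends e).2).

Lemma incident_wagner_label e v :
  incident e (f v) = (wagner_label e \in wagner_types_at v).
Proof.
have ends_adj : wagner_adj (g (ends e).1) (g (ends e).2).
  by rewrite -f_adj; apply/existsP; exists e; rewrite !gK -surjective_pairing eqxx.
rewrite -wagner_incidence // /incident.
by rewrite -[in RHS](can_eq fK) gK -[in RHS](can_eq fK) gK.
Qed.

Lemma wagner_label_deg (r : nat) : regular G r ->
  forall v, v < 8 -> \sum_(t <- wagner_types_at v) class_card wagner_label t = r.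
Proof.
move=> G_reg v v_lt; rewrite -(G_reg (f (Ordinal v_lt))) /deg.
rewrite -card_preim_seq ?wagner_types_at_uniq //.
by apply: eq_card => e; rewrite !inE incident_wagner_label.
Qed.

Lemma wagner_regular_colorable (r : nat) : regular G r -> edge_colorable G r.
Proof.
move=> G_reg; have fit := wagner_offsets_fit (wagner_label_deg G_reg).
apply: (@interval_edge_colorable _ _ wagner_label
          (wagner_offset (class_card wagner_label) r)).
  move=> e; apply: (fit _ (ltn_ord (g (ends e).1))).1.
  by rewrite -incident_wagner_label gK /incident eqxx.
move=> e e' v; rewrite -(gK v) !incident_wagner_label => ev e'v.
exact: (fit _ (ltn_ord (g v))).2.
Qed.

End WagnerLabelling.

Theorem corollary2p8 (G : multigraph) (r : nat) :
  loopless G -> r_graph G r -> underlying_is_wagner G ->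
  class1 G /\ edge_chromatic_number_is G r.
Proof.
move=> _ [G_reg _] [f [[g fK gK] f_adj]].
apply: (regular_colorable_class1 (f ord0) G_reg).
exact: (wagner_regular_colorable fK gK f_adj G_reg).
Qed.
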